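(* Let $T\ge2$, let $n\ge2T^2$ be an integer, and $N=\frac{\sqrt{2n+1}+\sqrt{2n+3}}{2}$. Then for all $x,y\in[-T,T]$, $$k_n(x,y)=\frac1\pi\frac{\sin N(x-y)}{x-y}+R_n(x,y)\qquad\text{with}\qquad |R_n(x,y)|\le\frac{17T^2}{\sqrt{2n+1}},$$ where for $x=y$ the first term is interpreted as $N/\pi$.
   Context: For an integer $n\ge0$, $H_n(x)=(-1)^n e^{x^2}\frac{d^n}{dx^n}e^{-x^2}$ is the $n$-th Hermite polynomial and $h_n(x)=\frac{1}{\pi^{1/4}\sqrt{2^n n!}}H_n(x)e^{-x^2/2}$ is the $n$-th Hermite function; $(h_n)_{n\ge0}$ is an orthonormal basis of $L^2(\mathbb R)$. The kernel $k_n(x,y)=\sum_{k=0}^n h_k(x)h_k(y)$ is the kernel of the orthogonal projection of $L^2(\mathbb R)$ onto $\mathrm{span}(h_0,\dots,h_n)$. *)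

From Stdlib Require Import Reals Lra Lia Arith Factorial ClassicalEpsilon.
Open Scope R_scope.

(* The derivative of f at x: the (unique) l with derivable_pt_lim f x l,
   chosen by Hilbert's epsilon (an arbitrary value if f is not differentiable at x;
   irrelevant here since all functions involved are smooth). *)
Definition deriv (f : R -> R) (x : R) : R :=
  epsilon (inhabits 0) (fun l => derivable_pt_lim f x l).

Fixpoint nth_deriv (n : nat) (f : R -> R) : R -> R :=
  match n with
  | O => f
  | S m => deriv (nth_deriv m f)
  end.

Definition hermite_poly (n : nat) (x : R) : R :=
  (-1) ^ n * exp (x ^ 2) * nth_deriv n (fun t => exp (- t ^ 2)) x.

Definition hermite_fun (n : nat) (x : R) : R :=
  / (Rpower PI (1/4) * sqrt (2 ^ n * INR (fact n))) * hermite_poly n x * exp (- x ^ 2 / 2).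

Definition kernel_k (n : nat) (x y : R) : R :=
  sum_f_R0 (fun k => hermite_fun k x * hermite_fun k y) n.

Definition sinc_term (N x y : R) : R :=
  if Req_EM_T x y then N / PI else / PI * (sin (N * (x - y)) / (x - y)).

(* On [-T, T] the Hermite function h = h_n solves h'' = (x^2 - λ^2) h with λ^2 = 2n + 1,
   a perturbation of size T^2 of the oscillator h'' = -λ^2 h.  By Christoffel-Darboux,
   k_n(x, y) is h(x) h(y) / 2 plus the Wronskian h(x) h'(y) - h'(x) h(y) divided by
   2 (x - y).  The energy h^2 + h'^2 / (λ^2 - z^2) has logarithmic derivative O(T / λ^2),
   so on [-T, T] it stays within a factor 1 + O(T^2 / λ^2) of its value at 0, which the
   Wallis inequalities pin to 2 / (π λ).  Writing h = A cos λz + B sin λz, the coefficients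
   move at speed O(T^2 |h| / λ); hence the Wronskian equals λ (A^2 + B^2) sin λ(x - y) up to
   O(T^2 |x - y| / λ), with λ (A^2 + B^2) = 2 / π + O(T^2 / λ^2).  Finally N - λ = O(1 / λ). *)

From Stdlib Require Import Reals Lra Lia Psatz Factorial ClassicalEpsilon FunctionalExtensionality.
From Coquelicot Require Import Coquelicot.
Open Scope R_scope.

Lemma deriv_eq (f : R -> R) (x l : R) : is_derive f x l -> deriv f x = l.
Proof.
  intros H%is_derive_Reals. unfold deriv.
  apply (uniqueness_limite f x); [|exact H].
  exact (epsilon_spec (inhabits 0) (fun l => derivable_pt_lim f x l) (ex_intro _ l H)).
Qed.

Ltac rewrite_Derive :=
  repeat match goal with
  | H : is_derive ?g ?x ?l |- context [Derive ?f ?x] => rewrite (is_derive_unique f x l H)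
  end.

Lemma exp_le_compat (a b : R) : a <= b -> exp a <= exp b.
Proof. intros [H|H]; [left; apply exp_increasing, H | right; rewrite H; reflexivity]. Qed.

Lemma exp_le_affine (a : R) : 0 <= a <= 2 / 3 -> exp a <= 1 + 3 * a.
Proof.
  intros Ha. pose proof (exp_ineq1_le (- a)). pose proof (exp_pos a).
  assert (exp a * exp (- a) = 1) by (rewrite <- exp_plus, Rplus_opp_r; apply exp_0).
  nra.
Qed.

Lemma Rabs_sub1_le_sq (q : R) : 0 <= q -> Rabs (q - 1) <= Rabs (q ^ 2 - 1).
Proof.
  intros Hq. replace (q ^ 2 - 1) with ((q - 1) * (q + 1)) by ring.
  rewrite Rabs_mult, (Rabs_right (q + 1)) by lra. pose proof (Rabs_pos (q - 1)). nra.
Qed.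

Lemma Rabs_le_sqrt (a P : R) : a ^ 2 <= P -> Rabs a <= sqrt P.
Proof. intros H. rewrite <- sqrt_Rsqr_abs. apply sqrt_le_1_alt. unfold Rsqr. simpl in H. lra. Qed.

Lemma cos_sin_sq (t : R) : cos t ^ 2 + sin t ^ 2 = 1.
Proof. pose proof (sin2_cos2 t) as H. unfold Rsqr in H. simpl. lra. Qed.

Lemma derive_nonpos_antimono (f f' : R -> R) (a b : R) : a <= b ->
  (forall c, a <= c <= b -> is_derive f c (f' c)) ->
  (forall c, a <= c <= b -> f' c <= 0) -> f b <= f a.
Proof.
  intros Hab Hd Hneg. destruct (Req_dec a b) as [<-|Hne]; [lra|].
  destruct (MVT_cor2 f f' a b) as [c [E Hc]]; [lra | intros c Hc; apply is_derive_Reals, Hd, Hc |].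
  assert (f' c <= 0) by (apply Hneg; lra). nra.
Qed.

Lemma mean_value_bound (f f' : R -> R) (lo hi K a b : R) :
  (forall c, lo <= c <= hi -> is_derive f c (f' c)) ->
  (forall c, lo <= c <= hi -> Rabs (f' c) <= K) ->
  lo <= a <= hi -> lo <= b <= hi -> Rabs (f b - f a) <= K * Rabs (b - a).
Proof.
  intros Hd HK.
  assert (Hlt : forall u v, lo <= u -> u < v -> v <= hi -> Rabs (f v - f u) <= K * Rabs (v - u)).
  { intros u v Hu Huv Hv.
    destruct (MVT_cor2 f f' u v) as [c [E Hc]]; [lra | intros c Hc; apply is_derive_Reals, Hd; lra |].
    rewrite E, Rabs_mult. apply Rmult_le_compat_r; [apply Rabs_pos | apply HK; lra]. }
  intros Ha Hb. destruct (Rtotal_order a b) as [Hab|[<-|Hab]].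
  - apply Hlt; lra.
  - rewrite !Rminus_diag, Rabs_R0, Rmult_0_r. lra.
  - rewrite (Rabs_minus_sym (f b)), (Rabs_minus_sym b). apply Hlt; lra.
Qed.

(* [P e^(-k t)] decreases and [P e^(k t)] increases. *)
Lemma gronwall (P P' : R -> R) (lo hi k a b : R) :
  (forall c, lo <= c <= hi -> is_derive P c (P' c)) ->
  (forall c, lo <= c <= hi -> Rabs (P' c) <= k * P c) ->
  lo <= a <= hi -> lo <= b <= hi -> P b <= P a * exp (k * Rabs (b - a)).
Proof.
  intros Hd Hk Ha Hb.
  assert (Hsign : forall c, lo <= c <= hi -> - (k * P c) <= P' c <= k * P c)
    by (intros c Hc; apply Rabs_le_between, Hk, Hc).
  destruct (Rle_dec a b) as [Hab|Hab].
  - assert (H := derive_nonpos_antimono (fun t => P t * exp (- (k * t)))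
                   (fun t => (P' t - k * P t) * exp (- (k * t))) a b Hab).
    simpl in H. rewrite Rabs_right by lra.
    replace (P b) with (P b * exp (- (k * b)) * exp (k * b))
      by (rewrite Rmult_assoc, <- exp_plus, Rplus_opp_l, exp_0; ring).
    replace (P a * exp (k * (b - a))) with (P a * exp (- (k * a)) * exp (k * b))
      by (rewrite Rmult_assoc, <- exp_plus; do 2 f_equal; ring).
    apply Rmult_le_compat_r; [left; apply exp_pos|]. apply H.
    + intros c Hc. pose proof (Hd c ltac:(lra)). auto_derive; [eexists; eassumption|]. rewrite_Derive. ring.
    + intros c Hc. pose proof (Hsign c ltac:(lra)). pose proof (exp_pos (- (k * c))). nra.
  - assert (H := derive_nonpos_antimono (fun t => - (P t * exp (k * t)))
                   (fun t => - ((P' t + k * P t) * exp (k * t))) b a ltac:(lra)).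
    simpl in H. rewrite Rabs_left by lra.
    replace (P b) with (P b * exp (k * b) * exp (- (k * b)))
      by (rewrite Rmult_assoc, <- exp_plus, Rplus_opp_r, exp_0; ring).
    replace (P a * exp (k * - (b - a))) with (P a * exp (k * a) * exp (- (k * b)))
      by (rewrite Rmult_assoc, <- exp_plus; do 2 f_equal; ring).
    apply Rmult_le_compat_r; [left; apply exp_pos|]. apply Ropp_le_cancel, H.
    + intros c Hc. pose proof (Hd c ltac:(lra)). auto_derive; [eexists; eassumption|]. rewrite_Derive. ring.
    + intros c Hc. pose proof (Hsign c ltac:(lra)). pose proof (exp_pos (k * c)). nra.
Qed.

Lemma sin_lipschitz (u v : R) : Rabs (sin u - sin v) <= Rabs (u - v).
Proof.
  rewrite <- (Rmult_1_l (Rabs (u - v))).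
  apply (mean_value_bound sin cos (Rmin u v) (Rmax u v));
    [intros; apply is_derive_Reals, derivable_pt_lim_sin
    | intros; apply Rabs_le, COS_bound
    | split; [apply Rmin_r | apply Rmax_r]
    | split; [apply Rmin_l | apply Rmax_l]].
Qed.

Lemma Rabs_sin_le (u : R) : Rabs (sin u) <= Rabs u.
Proof. pose proof (sin_lipschitz u 0) as H. rewrite sin_0, !Rminus_0_r in H. exact H. Qed.

Lemma Rabs_sin_mul_div_le (a d : R) : d <> 0 -> Rabs (sin (a * d) / d) <= Rabs a.
Proof.
  intros Hd. pose proof (Rabs_pos_lt d Hd).
  unfold Rdiv. rewrite Rabs_mult, Rabs_inv. apply (Rmult_le_reg_r (Rabs d)); [lra|].
  rewrite Rmult_assoc, Rinv_l, Rmult_1_r, <- Rabs_mult by lra. apply Rabs_sin_le.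
Qed.

Lemma Rabs_sin_mul_sub_div_le (a b d : R) : d <> 0 ->
  Rabs ((sin (a * d) - sin (b * d)) / d) <= Rabs (a - b).
Proof.
  intros Hd. pose proof (Rabs_pos_lt d Hd).
  unfold Rdiv. rewrite Rabs_mult, Rabs_inv. apply (Rmult_le_reg_r (Rabs d)); [lra|].
  rewrite Rmult_assoc, Rinv_l, Rmult_1_r, <- Rabs_mult by lra.
  replace ((a - b) * d) with (a * d - b * d) by ring. apply sin_lipschitz.
Qed.

Lemma sqrt_mean_gap (L : R) : 0 < L ->
  0 <= (sqrt L + sqrt (L + 2)) / 2 - sqrt L <= 1 / (2 * sqrt L).
Proof.
  intros HL. pose proof (sqrt_lt_R0 L HL).
  assert (Hs : sqrt L < sqrt (L + 2)) by (apply sqrt_lt_1; lra).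
  assert (Hprod : (sqrt (L + 2) - sqrt L) * (sqrt (L + 2) + sqrt L) = 2)
    by (ring_simplify; rewrite !pow2_sqrt by lra; ring).
  split; [lra|].
  apply (Rmult_le_reg_r (2 * sqrt L)); [lra|]. replace (1 / (2 * sqrt L) * (2 * sqrt L)) with 1 by (field; lra).
  nra.
Qed.

Lemma freq_gap_div_PI_le (lam N : R) : 0 < lam -> 0 <= N - lam <= 1 / (2 * lam) ->
  (N - lam) / PI <= 1 / 6 * / lam.
Proof.
  intros Hl HN. pose proof PI2_3_2.
  assert (/ PI <= / 3) by (apply Rinv_le_contravar; lra).
  apply (Rle_trans _ (1 / (2 * lam) * / 3)); [apply Rmult_le_compat; try lra; left; apply Rinv_0_lt_compat; lra|].
  right. field. lra.
Qed.

(** * Hermite functions *)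

Fixpoint hermite (n : nat) (x : R) : R :=
  match n with
  | O => 1
  | S O => 2 * x
  | S (S k as m) => 2 * x * hermite m x - 2 * INR m * hermite k x
  end.

Definition hermite_der (n : nat) (x : R) : R :=
  match n with O => 0 | S k => 2 * INR n * hermite k x end.

Lemma hermite_S (n : nat) (x : R) : hermite (S n) x = 2 * x * hermite n x - hermite_der n x.
Proof. destruct n as [|[|n]]; simpl; ring. Qed.

Lemma is_derive_hermite (n : nat) (x : R) : is_derive (hermite n) x (hermite_der n x).
Proof.
  enough (H : is_derive (hermite n) x (hermite_der n x)
              /\ is_derive (hermite (S n)) x (hermite_der (S n) x)) by apply H.
  induction n as [|n [IH0 IH1]].
  - split; simpl; auto_derive; auto; ring.
  - split; [exact IH1|].
    apply (is_derive_ext (fun t => 2 * t * hermite (S n) t - 2 * INR (S n) * hermite n t));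
      [reflexivity|].
    change (hermite_der (S (S n)) x) with (2 * INR (S (S n)) * hermite (S n) x).
    replace (2 * INR (S (S n)) * hermite (S n) x)
      with (2 * hermite (S n) x + 2 * x * hermite_der (S n) x - 2 * INR (S n) * hermite_der n x)
      by (change (hermite_der (S n) x) with (2 * INR (S n) * hermite n x);
          rewrite (hermite_S n), !S_INR; ring).
    (* keep [auto_derive] from unfolding the recursion *)
    revert IH0 IH1; generalize (hermite n) (hermite (S n)) (hermite_der n x) (hermite_der (S n) x).
    intros f g df dg Hf Hg.
    auto_derive; [repeat split; eexists; eassumption|].
    rewrite_Derive. simpl INR; ring.
Qed.

Lemma nth_deriv_gaussian (n : nat) :
  nth_deriv n (fun t => exp (- t ^ 2)) = fun x => (-1) ^ n * hermite n x * exp (- x ^ 2).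
Proof.
  induction n as [|n IH]; cbn [nth_deriv]; apply functional_extensionality; intros x.
  - simpl; ring.
  - rewrite IH. apply deriv_eq. auto_derive; [repeat split; eexists; apply is_derive_hermite|].
    pose proof (is_derive_hermite n x). rewrite_Derive.
    rewrite hermite_S. simpl. ring.
Qed.

Lemma hermite_poly_eq (n : nat) (x : R) : hermite_poly n x = hermite n x.
Proof.
  unfold hermite_poly. rewrite nth_deriv_gaussian.
  replace ((-1) ^ n * exp (x ^ 2) * ((-1) ^ n * hermite n x * exp (- x ^ 2)))
    with (((-1) * (-1)) ^ n * exp (x ^ 2 + - x ^ 2) * hermite n x)
    by (rewrite Rpow_mult_distr, exp_plus; ring).
  replace (x ^ 2 + - x ^ 2) with 0 by ring. replace (-1 * -1) with 1 by ring.
  rewrite exp_0, pow1. ring.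
Qed.

Definition hermite_norm (n : nat) : R := / (Rpower PI (1/4) * sqrt (2 ^ n * INR (fact n))).

Definition beta (n : nat) : R := sqrt (2 * INR (S n)).

Lemma beta_pos (n : nat) : 0 < beta n.
Proof. apply sqrt_lt_R0. rewrite S_INR. pose proof (pos_INR n). lra. Qed.

Lemma beta_sq (n : nat) : beta n ^ 2 = 2 * INR (S n).
Proof. unfold beta. rewrite pow2_sqrt; [reflexivity|]. rewrite S_INR. pose proof (pos_INR n). lra. Qed.

Lemma hermite_norm_S (n : nat) : hermite_norm n = beta n * hermite_norm (S n).
Proof.
  unfold hermite_norm, beta.
  assert (Hf : 0 < 2 ^ n * INR (fact n)) by (apply Rmult_lt_0_compat; [apply pow_lt; lra | apply INR_fact_lt_0]).
  assert (Hs : 0 < 2 * INR (S n)) by (rewrite S_INR; pose proof (pos_INR n); lra).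
  replace (2 ^ S n * INR (fact (S n))) with ((2 ^ n * INR (fact n)) * (2 * INR (S n)))
    by (rewrite fact_simpl, mult_INR; simpl; ring).
  rewrite (sqrt_mult (2 ^ n * INR (fact n)) (2 * INR (S n))) by lra.
  assert (0 < Rpower PI (1/4)) by apply exp_pos.
  pose proof (sqrt_lt_R0 _ Hf). pose proof (sqrt_lt_R0 _ Hs).
  field. lra.
Qed.

Lemma hermite_fun_eq (n : nat) (x : R) :
  hermite_fun n x = hermite_norm n * hermite n x * exp (- x ^ 2 / 2).
Proof. unfold hermite_fun. rewrite hermite_poly_eq. reflexivity. Qed.

Lemma hermite_fun_1 (x : R) : beta 0 * hermite_fun 1 x = 2 * x * hermite_fun 0 x.
Proof. rewrite !hermite_fun_eq, (hermite_norm_S 0). simpl. ring. Qed.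

Lemma hermite_fun_SS (n : nat) (x : R) :
  beta (S n) * hermite_fun (S (S n)) x = 2 * x * hermite_fun (S n) x - beta n * hermite_fun n x.
Proof.
  rewrite !hermite_fun_eq, (hermite_norm_S n), (hermite_norm_S (S n)).
  change (hermite (S (S n)) x) with (2 * x * hermite (S n) x - 2 * INR (S n) * hermite n x).
  rewrite <- beta_sq. ring.
Qed.

Definition hermite_fun_der (n : nat) (x : R) : R := x * hermite_fun n x - beta n * hermite_fun (S n) x.

Lemma is_derive_hermite_fun (n : nat) (x : R) : is_derive (hermite_fun n) x (hermite_fun_der n x).
Proof.
  apply (is_derive_ext (fun t => hermite_norm n * hermite n t * exp (- t ^ 2 / 2)));
    [intros; symmetry; apply hermite_fun_eq|].
  pose proof (is_derive_hermite n x).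
  auto_derive; [repeat split; eexists; eassumption|]. rewrite_Derive.
  unfold hermite_fun_der. rewrite !hermite_fun_eq, (hermite_norm_S n), hermite_S. unfold Rdiv; simpl. field.
Qed.

Lemma hermite_fun_der_S (n : nat) (x : R) :
  hermite_fun_der (S n) x = beta n * hermite_fun n x - x * hermite_fun (S n) x.
Proof. unfold hermite_fun_der. rewrite hermite_fun_SS. ring. Qed.

Definition hermite_eigenvalue (n : nat) : R := 2 * INR n + 1.

Lemma hermite_eigenvalue_pos (n : nat) : 0 < hermite_eigenvalue n.
Proof. unfold hermite_eigenvalue. pose proof (pos_INR n). lra. Qed.

Definition freq (n : nat) : R := sqrt (hermite_eigenvalue n).

Lemma freq_pos (n : nat) : 0 < freq n.
Proof. apply sqrt_lt_R0, hermite_eigenvalue_pos. Qed.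

Lemma freq_sq (n : nat) : freq n ^ 2 = hermite_eigenvalue n.
Proof. apply pow2_sqrt, Rlt_le, hermite_eigenvalue_pos. Qed.

Lemma is_derive_hermite_fun_der (n : nat) (x : R) :
  is_derive (hermite_fun_der n) x ((x ^ 2 - hermite_eigenvalue n) * hermite_fun n x).
Proof.
  pose proof (is_derive_hermite_fun n x). pose proof (is_derive_hermite_fun (S n) x).
  unfold hermite_fun_der at 1.
  auto_derive; [repeat split; eexists; eassumption|]. rewrite_Derive.
  rewrite hermite_fun_der_S. unfold hermite_fun_der, hermite_eigenvalue.
  transitivity ((1 + x ^ 2 - beta n ^ 2) * hermite_fun n x); [ring|].
  rewrite beta_sq, S_INR. ring.
Qed.

Lemma christoffel_darboux (n : nat) (x y : R) :
  2 * (x - y) * kernel_k n x y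
  = beta n * (hermite_fun (S n) x * hermite_fun n y - hermite_fun n x * hermite_fun (S n) y).
Proof.
  unfold kernel_k. induction n as [|n IH]; simpl sum_f_R0.
  - transitivity ((beta 0 * hermite_fun 1 x) * hermite_fun 0 y - hermite_fun 0 x * (beta 0 * hermite_fun 1 y));
      [rewrite !hermite_fun_1; ring | ring].
  - rewrite Rmult_plus_distr_l, IH.
    transitivity ((beta (S n) * hermite_fun (S (S n)) x) * hermite_fun (S n) y
                  - hermite_fun (S n) x * (beta (S n) * hermite_fun (S (S n)) y));
      [rewrite !hermite_fun_SS; ring | ring].
Qed.

Lemma christoffel_darboux_diag (n : nat) (x : R) :
  2 * kernel_k n x x
  = beta n ^ 2 * (hermite_fun n x ^ 2 + hermite_fun (S n) x ^ 2)
    - 2 * beta n * x * hermite_fun n x * hermite_fun (S n) x.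
Proof.
  unfold kernel_k. induction n as [|n IH]; simpl sum_f_R0.
  - transitivity (beta 0 ^ 2 * hermite_fun 0 x ^ 2 + (beta 0 * hermite_fun 1 x) ^ 2
                  - 2 * x * hermite_fun 0 x * (beta 0 * hermite_fun 1 x));
      [rewrite hermite_fun_1, beta_sq; simpl; ring | ring].
  - rewrite Rmult_plus_distr_l, IH.
    transitivity (beta (S n) ^ 2 * hermite_fun (S n) x ^ 2 + (beta (S n) * hermite_fun (S (S n)) x) ^ 2
                  - 2 * x * hermite_fun (S n) x * (beta (S n) * hermite_fun (S (S n)) x)); [|ring].
    pose proof (beta_sq n) as Hb. rewrite S_INR in Hb.
    rewrite hermite_fun_SS, (beta_sq (S n)), !S_INR. ring [Hb].
Qed.

Lemma kernel_off_diag (n : nat) (x y : R) : x <> y ->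
  kernel_k n x y = hermite_fun n x * hermite_fun n y / 2
    + (hermite_fun n x * hermite_fun_der n y - hermite_fun_der n x * hermite_fun n y) / (2 * (x - y)).
Proof.
  intros Hxy. apply (Rmult_eq_reg_l (2 * (x - y))); [|apply Rmult_integral_contrapositive; split; lra].
  rewrite christoffel_darboux. unfold hermite_fun_der. field. lra.
Qed.

Lemma kernel_diag (n : nat) (x : R) :
  kernel_k n x x = ((hermite_eigenvalue n + 1 - x ^ 2) * hermite_fun n x ^ 2 + hermite_fun_der n x ^ 2) / 2.
Proof.
  apply (Rmult_eq_reg_l 2); [|lra].
  rewrite christoffel_darboux_diag. unfold hermite_fun_der, hermite_eigenvalue.
  pose proof (beta_sq n) as Hb. rewrite S_INR in Hb. field [Hb].
Qed.

(** * Wallis integrals and the values at 0 *)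

Definition wallis (k : nat) : R := RInt (fun t => sin t ^ k) 0 (PI / 2).

Lemma ex_RInt_sin_pow (k : nat) : ex_RInt (fun t => sin t ^ k) 0 (PI / 2).
Proof.
  apply (@ex_RInt_continuous R_CompleteNormedModule). intros z _.
  apply (ex_derive_continuous (K := R_AbsRing) (V := R_NormedModule)). auto_derive. auto.
Qed.

Lemma wallis_0 : wallis 0 = PI / 2.
Proof. unfold wallis. simpl. rewrite RInt_const. unfold scal; simpl. unfold mult; simpl. ring. Qed.

Lemma wallis_1 : wallis 1 = 1.
Proof.
  unfold wallis. apply is_RInt_unique.
  replace 1 with (minus (- cos (PI / 2)) (- cos 0))
    by (rewrite cos_PI2, cos_0; unfold minus, plus, opp; simpl; ring).
  apply (is_RInt_derive (V := R_CompleteNormedModule) (fun t => - cos t)).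
  - intros t _. auto_derive; auto. ring.
  - intros t _. apply (ex_derive_continuous (K := R_AbsRing) (V := R_NormedModule)). auto_derive. auto.
Qed.

(* Integration by parts: [sin^(k+1) cos] has derivative [(k+1) sin^k - (k+2) sin^(k+2)]
   and vanishes at both ends. *)
Lemma wallis_SS (k : nat) : INR (S (S k)) * wallis (S (S k)) = INR (S k) * wallis k.
Proof.
  assert (Hparts : is_RInt (fun t => INR (S k) * sin t ^ k - INR (S (S k)) * sin t ^ S (S k)) 0 (PI / 2)
                     (minus (sin (PI / 2) ^ S k * cos (PI / 2)) (sin 0 ^ S k * cos 0))).
  { apply (is_RInt_derive (V := R_CompleteNormedModule) (fun t => sin t ^ S k * cos t)).
    - intros t _. auto_derive; [auto|].
      change (match k with 0%nat => 1 | S _ => INR k + 1 end) with (INR (S k)).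
      pose proof (sin2_cos2 t) as Hsc. unfold Rsqr in Hsc. rewrite !S_INR. simpl pow.
      transitivity ((INR k + 1) * sin t ^ k * (cos t * cos t) - sin t * sin t * sin t ^ k); [ring|].
      replace (cos t * cos t) with (1 - sin t * sin t) by lra. ring.
    - intros t _. apply (ex_derive_continuous (K := R_AbsRing) (V := R_NormedModule)). auto_derive. auto. }
  assert (Hlin : is_RInt (fun t => INR (S k) * sin t ^ k - INR (S (S k)) * sin t ^ S (S k)) 0 (PI / 2)
                   (INR (S k) * wallis k - INR (S (S k)) * wallis (S (S k)))).
  { apply (is_RInt_minus (fun t => INR (S k) * sin t ^ k) (fun t => INR (S (S k)) * sin t ^ S (S k)));
      apply (is_RInt_scal (fun t => sin t ^ _)); apply (RInt_correct (V := R_CompleteNormedModule));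
      apply ex_RInt_sin_pow. }
  pose proof (is_RInt_unique _ _ _ _ Hparts) as E1. pose proof (is_RInt_unique _ _ _ _ Hlin) as E2.
  rewrite E1, cos_PI2, sin_0, pow_i in E2 by lia.
  assert (minus (sin (PI / 2) ^ S k * 0) (0 * cos 0) = 0) by (unfold minus, plus, opp; simpl; ring).
  lra.
Qed.

Lemma wallis_nonneg (k : nat) : 0 <= wallis k.
Proof.
  apply RInt_ge_0; [pose proof PI_RGT_0; lra | apply ex_RInt_sin_pow |].
  intros t Ht. apply pow_le, sin_ge_0; pose proof PI_RGT_0; lra.
Qed.

Lemma wallis_S_le (k : nat) : wallis (S k) <= wallis k.
Proof.
  apply RInt_le; [pose proof PI_RGT_0; lra | apply ex_RInt_sin_pow | apply ex_RInt_sin_pow |].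
  intros t Ht. simpl.
  assert (0 <= sin t <= 1) by (split; [apply sin_ge_0 | apply SIN_bound]; pose proof PI_RGT_0; lra).
  assert (0 <= sin t ^ k) by (apply pow_le; lra).
  nra.
Qed.

Lemma wallis_prod (k : nat) : INR (S k) * wallis (S k) * wallis k = PI / 2.
Proof.
  induction k as [|k IH].
  - rewrite wallis_0, wallis_1. simpl. ring.
  - rewrite <- IH, wallis_SS. ring.
Qed.

Lemma wallis_even_sq_bounds (m : nat) : (1 <= m)%nat ->
  PI <= 2 * (2 * INR m + 1) * wallis (2 * m) ^ 2 /\ 4 * INR m * wallis (2 * m) ^ 2 <= PI.
Proof.
  intros Hm. destruct m as [|j]; [lia|].
  pose proof (pos_INR j).
  pose proof (wallis_nonneg (2 * S j)).
  pose proof (wallis_prod (2 * S j)) as Hlo. pose proof (wallis_S_le (2 * S j)).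
  replace (2 * S j)%nat with (S (S (2 * j))) in * by lia.
  pose proof (wallis_prod (S (2 * j))) as Hup. pose proof (wallis_S_le (S (2 * j))).
  rewrite !S_INR, mult_INR in *. simpl INR in *.
  set (w := wallis (S (S (2 * j)))) in *.
  assert (w * (w - wallis (S (S (S (2 * j))))) >= 0) by nra.
  assert (w * (wallis (S (2 * j)) - w) >= 0) by nra.
  split; nra.
Qed.

Lemma hermite_fun_odd_0 (m : nat) : hermite_fun (S (2 * m)) 0 = 0.
Proof.
  induction m as [|m IH].
  - assert (H : beta 0 * hermite_fun 1 0 = 0) by (rewrite hermite_fun_1; ring).
    destruct (Rmult_integral _ _ H); [pose proof (beta_pos 0); lra | assumption].
  - replace (S (2 * S m)) with (S (S (S (2 * m)))) by lia.
    assert (H : beta (S (S (2 * m))) * hermite_fun (S (S (S (2 * m)))) 0 = 0)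
      by (rewrite hermite_fun_SS, IH; ring).
    destruct (Rmult_integral _ _ H); [pose proof (beta_pos (S (S (2 * m)))); lra | assumption].
Qed.

(* Both sides satisfy [(2m+2) u_(m+1) = (2m+1) u_m]. *)
Lemma hermite_fun_even_0 (m : nat) : hermite_fun (2 * m) 0 ^ 2 = 2 * wallis (2 * m) / (PI * sqrt PI).
Proof.
  pose proof PI_RGT_0. assert (0 < sqrt PI) by (apply sqrt_lt_R0; lra).
  induction m as [|m IH].
  - change (hermite_fun 0 0 ^ 2 = 2 * wallis 0 / (PI * sqrt PI)).
    rewrite hermite_fun_eq, wallis_0. unfold hermite_norm. simpl.
    assert (0 < Rpower PI (1 / 4)) by apply exp_pos.
    assert (E : Rpower PI (1 / 4) * Rpower PI (1 / 4) = sqrt PI).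
    { rewrite <- Rpower_plus. replace (1 / 4 + 1 / 4) with (/ 2) by field. apply Rpower_sqrt. lra. }
    replace (sqrt (1 * 1)) with 1 by (rewrite Rmult_1_r; symmetry; apply sqrt_1).
    replace (exp (- (0 * (0 * 1)) / 2)) with 1 by (rewrite <- exp_0; f_equal; field).
    rewrite <- E. field. lra.
  - replace (2 * S m)%nat with (S (S (2 * m))) in * by lia.
    assert (Hsq : beta (S (2 * m)) ^ 2 * hermite_fun (S (S (2 * m))) 0 ^ 2
                  = beta (2 * m) ^ 2 * hermite_fun (2 * m) 0 ^ 2)
      by (rewrite <- !Rpow_mult_distr, hermite_fun_SS; ring).
    pose proof (wallis_SS (2 * m)) as W.
    rewrite !beta_sq, IH in Hsq. rewrite !S_INR, mult_INR in *. simpl INR in *.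
    pose proof (pos_INR m).
    apply (Rmult_eq_reg_l (2 * ((1 + 1) * INR m + 1 + 1))); [|lra].
    rewrite Hsq.
    transitivity (4 / (PI * sqrt PI) * (((1 + 1) * INR m + 1) * wallis (2 * m))); [field; lra|].
    rewrite <- W. field. lra.
Qed.

(** * Energy *)

(* A Sonin-type function: by the Hermite equation the [h h'] terms cancel in its derivative. *)
Definition energy (n : nat) (z : R) : R :=
  hermite_fun n z ^ 2 + hermite_fun_der n z ^ 2 / (hermite_eigenvalue n - z ^ 2).

Definition amplitude (n : nat) (z : R) : R :=
  hermite_fun n z ^ 2 + hermite_fun_der n z ^ 2 / hermite_eigenvalue n.

Lemma energy_nonneg (n : nat) (z : R) : z ^ 2 < hermite_eigenvalue n -> 0 <= energy n z.
Proof.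
  intros Hz. unfold energy. pose proof (pow2_ge_0 (hermite_fun n z)).
  assert (0 <= hermite_fun_der n z ^ 2 / (hermite_eigenvalue n - z ^ 2))
    by (apply Rdiv_le_0_compat; [apply pow2_ge_0 | lra]).
  lra.
Qed.

Lemma is_derive_energy (n : nat) (z : R) : z ^ 2 < hermite_eigenvalue n ->
  is_derive (energy n) z (2 * z * hermite_fun_der n z ^ 2 / (hermite_eigenvalue n - z ^ 2) ^ 2).
Proof.
  intros Hz. pose proof (is_derive_hermite_fun n z). pose proof (is_derive_hermite_fun_der n z).
  unfold energy. auto_derive; [repeat split; try (eexists; eassumption); lra|]. rewrite_Derive.
  field. lra.
Qed.

Lemma energy_log_derivative (n : nat) (T z : R) : T ^ 2 < hermite_eigenvalue n -> -T <= z <= T ->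
  Rabs (2 * z * hermite_fun_der n z ^ 2 / (hermite_eigenvalue n - z ^ 2) ^ 2)
  <= 2 * T / (hermite_eigenvalue n - T ^ 2) * energy n z.
Proof.
  intros HT Hz. set (L := hermite_eigenvalue n) in *.
  assert (Hzz : z ^ 2 <= T ^ 2) by nra.
  set (q := hermite_fun_der n z ^ 2 / (L - z ^ 2)).
  assert (Hq : 0 <= q) by (apply Rdiv_le_0_compat; [apply pow2_ge_0 | lra]).
  assert (Hqe : q <= energy n z) by (unfold energy; fold L q; pose proof (pow2_ge_0 (hermite_fun n z)); lra).
  replace (2 * z * hermite_fun_der n z ^ 2 / (L - z ^ 2) ^ 2) with (2 * z / (L - z ^ 2) * q)
    by (unfold q; field; lra).
  rewrite Rabs_mult, (Rabs_right q) by lra.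
  apply Rmult_le_compat; [apply Rabs_pos | exact Hq | | exact Hqe].
  unfold Rdiv. rewrite !Rabs_mult, Rabs_inv, (Rabs_right 2), (Rabs_right (L - z ^ 2)) by lra.
  apply Rmult_le_compat.
  - pose proof (Rabs_pos z). lra.
  - left. apply Rinv_0_lt_compat. lra.
  - apply Rmult_le_compat_l; [lra | apply Rabs_le; lra].
  - apply Rinv_le_contravar; lra.
Qed.

Lemma amplitude_le_energy (n : nat) (z : R) : z ^ 2 < hermite_eigenvalue n -> amplitude n z <= energy n z.
Proof.
  intros Hz. unfold amplitude, energy. apply Rplus_le_compat_l.
  unfold Rdiv. apply Rmult_le_compat_l; [apply pow2_ge_0|].
  apply Rinv_le_contravar; [lra | pose proof (pow2_ge_0 z); lra].
Qed.

Lemma energy_le_amplitude (n : nat) (T z : R) : T ^ 2 < hermite_eigenvalue n -> z ^ 2 <= T ^ 2 ->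
  (1 - T ^ 2 / hermite_eigenvalue n) * energy n z <= amplitude n z.
Proof.
  intros HT Hz. unfold amplitude, energy. set (L := hermite_eigenvalue n) in *.
  pose proof (pow2_ge_0 z). pose proof (pow2_ge_0 (hermite_fun n z)).
  assert (Hu : 0 <= hermite_fun_der n z ^ 2 / L) by (apply Rdiv_le_0_compat; [apply pow2_ge_0 | lra]).
  assert (H1 : 0 <= 1 - T ^ 2 / L <= 1).
  { assert (0 <= T ^ 2 / L) by (apply Rdiv_le_0_compat; [apply pow2_ge_0 | lra]).
    split; [|lra].
    apply (Rmult_le_reg_r L); [lra|]. field_simplify; lra. }
  assert (H2 : 0 <= (L - T ^ 2) / (L - z ^ 2) <= 1).
  { split; [apply Rdiv_le_0_compat; lra|]. apply (Rmult_le_reg_r (L - z ^ 2)); [lra|]. field_simplify; lra. }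
  replace ((1 - T ^ 2 / L) * (hermite_fun n z ^ 2 + hermite_fun_der n z ^ 2 / (L - z ^ 2)))
    with ((1 - T ^ 2 / L) * hermite_fun n z ^ 2 + (L - T ^ 2) / (L - z ^ 2) * (hermite_fun_der n z ^ 2 / L))
    by (field; lra).
  nra.
Qed.

Lemma wallis_ratio_even (p W2 : R) : 1 <= p -> PI <= 2 * (2 * p + 1) * W2 -> 4 * p * W2 <= PI ->
  Rabs ((4 * p + 1) * W2 / PI - 1) <= 2 / (4 * p + 1).
Proof.
  intros Hp Hlo Hhi. pose proof PI_RGT_0. apply Rabs_le.
  split; apply (Rmult_le_reg_r (PI * (4 * p + 1))); try nra; field_simplify; try lra; nra.
Qed.

Lemma wallis_ratio_odd (p W2 : R) : 1 <= p -> PI <= 2 * (2 * p + 1) * W2 -> 4 * p * W2 <= PI ->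
  Rabs (16 * p ^ 2 * W2 / (PI * (4 * p - 1)) - 1) <= 2 / (4 * p - 1).
Proof.
  intros Hp Hlo Hhi. pose proof PI_RGT_0. apply Rabs_le.
  split; apply (Rmult_le_reg_r (PI * (4 * p - 1))); try nra; field_simplify; try lra; nra.
Qed.

Lemma energy_even_0 (m : nat) : energy (2 * m) 0 = 2 * wallis (2 * m) / (PI * sqrt PI).
Proof.
  pose proof (hermite_eigenvalue_pos (2 * m)). pose proof PI_RGT_0. pose proof (sqrt_lt_R0 PI ltac:(lra)).
  unfold energy, hermite_fun_der. rewrite hermite_fun_odd_0, hermite_fun_even_0. field. lra.
Qed.

Lemma energy_odd_0 (m : nat) :
  energy (S (2 * m)) 0
  = 2 * INR (S (S (2 * m))) * (2 * wallis (2 * S m) / (PI * sqrt PI)) / hermite_eigenvalue (S (2 * m)).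
Proof.
  pose proof (hermite_eigenvalue_pos (S (2 * m))). pose proof PI_RGT_0. pose proof (sqrt_lt_R0 PI ltac:(lra)).
  rewrite <- hermite_fun_even_0. replace (2 * S m)%nat with (S (S (2 * m))) by lia.
  unfold energy, hermite_fun_der. rewrite hermite_fun_odd_0, <- beta_sq. field. lra.
Qed.

Lemma energy_at_0_bound (n : nat) : (1 <= n)%nat ->
  Rabs ((PI * freq n * energy n 0 / 2) ^ 2 - 1) <= 2 / hermite_eigenvalue n.
Proof.
  intros Hn. pose proof PI_RGT_0. pose proof (hermite_eigenvalue_pos n) as HL.
  assert (0 < sqrt PI) by (apply sqrt_lt_R0; lra).
  assert (HsPI : sqrt PI ^ 2 = PI) by (apply pow2_sqrt; lra).
  pose proof (freq_sq n) as HsL.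
  destruct (Nat.Even_or_Odd n) as [[m ->]|[m ->]].
  - assert (Hm : (1 <= m)%nat) by lia.
    rewrite energy_even_0.
    replace ((PI * freq (2 * m) * (2 * wallis (2 * m) / (PI * sqrt PI)) / 2) ^ 2)
      with (freq (2 * m) ^ 2 * wallis (2 * m) ^ 2 / sqrt PI ^ 2) by (field; lra).
    rewrite HsL, HsPI. unfold hermite_eigenvalue. rewrite mult_INR. simpl INR.
    replace (2 * ((1 + 1) * INR m) + 1) with (4 * INR m + 1) by ring.
    destruct (wallis_even_sq_bounds m Hm).
    apply wallis_ratio_even; [apply (le_INR 1); exact Hm | lra | lra].
  - replace (2 * m + 1)%nat with (S (2 * m)) in * by lia.
    rewrite energy_odd_0.
    replace ((PI * freq (S (2 * m))
               * (2 * INR (S (S (2 * m))) * (2 * wallis (2 * S m) / (PI * sqrt PI)) / hermite_eigenvalue (S (2 * m)))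
               / 2) ^ 2)
      with (freq (S (2 * m)) ^ 2 * (2 * INR (S (S (2 * m)))) ^ 2 * wallis (2 * S m) ^ 2
            / (sqrt PI ^ 2 * hermite_eigenvalue (S (2 * m)) ^ 2)) by (field; lra).
    rewrite HsL, HsPI.
    replace (INR (S (S (2 * m)))) with (2 * INR (S m)) by (rewrite !S_INR, mult_INR; simpl; ring).
    replace (hermite_eigenvalue (S (2 * m))) with (4 * INR (S m) - 1) in *
      by (unfold hermite_eigenvalue; rewrite !S_INR, mult_INR; simpl; ring).
    destruct (wallis_even_sq_bounds (S m) ltac:(lia)).
    replace ((4 * INR (S m) - 1) * (2 * (2 * INR (S m))) ^ 2 * wallis (2 * S m) ^ 2 / (PI * (4 * INR (S m) - 1) ^ 2))
      with (16 * INR (S m) ^ 2 * wallis (2 * S m) ^ 2 / (PI * (4 * INR (S m) - 1))) by (field; lra).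
    apply wallis_ratio_odd; [apply (le_INR 1); lia | lra | lra].
Qed.

(** * Variation of constants *)

(* The coefficients [A], [B] of [h = A cos (λ z) + B sin (λ z)] in the variation of constants. *)
Definition coef_cos (n : nat) (z : R) : R :=
  cos (freq n * z) * hermite_fun n z - sin (freq n * z) * hermite_fun_der n z / freq n.

Definition coef_sin (n : nat) (z : R) : R :=
  sin (freq n * z) * hermite_fun n z + cos (freq n * z) * hermite_fun_der n z / freq n.

Lemma hermite_fun_coef (n : nat) (z : R) :
  hermite_fun n z = coef_cos n z * cos (freq n * z) + coef_sin n z * sin (freq n * z).
Proof.
  pose proof (freq_pos n). unfold coef_cos, coef_sin.
  transitivity ((cos (freq n * z) ^ 2 + sin (freq n * z) ^ 2) * hermite_fun n z);
    [rewrite cos_sin_sq; ring | field; lra].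
Qed.

Lemma hermite_fun_der_coef (n : nat) (z : R) :
  hermite_fun_der n z = freq n * (coef_sin n z * cos (freq n * z) - coef_cos n z * sin (freq n * z)).
Proof.
  pose proof (freq_pos n). unfold coef_cos, coef_sin.
  transitivity ((cos (freq n * z) ^ 2 + sin (freq n * z) ^ 2) * hermite_fun_der n z);
    [rewrite cos_sin_sq; ring | field; lra].
Qed.

Lemma coef_sq_sum (n : nat) (z : R) : coef_cos n z ^ 2 + coef_sin n z ^ 2 = amplitude n z.
Proof.
  pose proof (freq_pos n). unfold coef_cos, coef_sin, amplitude. rewrite <- freq_sq.
  transitivity ((cos (freq n * z) ^ 2 + sin (freq n * z) ^ 2)
                * (hermite_fun n z ^ 2 + hermite_fun_der n z ^ 2 / freq n ^ 2)); [field; lra|].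
  rewrite cos_sin_sq. ring.
Qed.

Lemma is_derive_coef_cos (n : nat) (z : R) :
  is_derive (coef_cos n) z (- (z ^ 2 / freq n) * sin (freq n * z) * hermite_fun n z).
Proof.
  pose proof (freq_pos n). pose proof (freq_sq n) as HL.
  pose proof (is_derive_hermite_fun n z). pose proof (is_derive_hermite_fun_der n z).
  unfold coef_cos. auto_derive; [repeat split; try (eexists; eassumption); lra|]. rewrite_Derive.
  rewrite <- HL. field. lra.
Qed.

Lemma is_derive_coef_sin (n : nat) (z : R) :
  is_derive (coef_sin n) z (z ^ 2 / freq n * cos (freq n * z) * hermite_fun n z).
Proof.
  pose proof (freq_pos n). pose proof (freq_sq n) as HL.
  pose proof (is_derive_hermite_fun n z). pose proof (is_derive_hermite_fun_der n z).
  unfold coef_sin. auto_derive; [repeat split; try (eexists; eassumption); lra|]. rewrite_Derive.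
  rewrite <- HL. field. lra.
Qed.

Definition coef_error (n : nat) (x y : R) : R :=
  (coef_cos n x - coef_cos n y)
    * (sin (freq n * (x - y)) * coef_cos n y + cos (freq n * (x - y)) * coef_sin n y)
  - (coef_sin n x - coef_sin n y)
    * (cos (freq n * (x - y)) * coef_cos n y - sin (freq n * (x - y)) * coef_sin n y).

(* With constant coefficients [coef_error] would vanish. *)
Lemma wronskian_coef (n : nat) (x y : R) :
  hermite_fun n x * hermite_fun_der n y - hermite_fun_der n x * hermite_fun n y
  = freq n * (amplitude n y * sin (freq n * (x - y)) + coef_error n x y).
Proof.
  rewrite !(hermite_fun_coef n x), !(hermite_fun_coef n y), !(hermite_fun_der_coef n x),
    !(hermite_fun_der_coef n y), <- coef_sq_sum.
  unfold coef_error. replace (freq n * (x - y)) with (freq n * x - freq n * y) by ring.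
  rewrite sin_minus, cos_minus. ring.
Qed.

Section CoefficientBounds.

Variables (n : nat) (T M : R).
Hypothesis hermite_fun_sq_le : forall z, -T <= z <= T -> hermite_fun n z ^ 2 <= M.

Lemma coef_speed_le (c t : R) : -T <= c <= T -> Rabs t <= 1 ->
  Rabs (c ^ 2 / freq n * t * hermite_fun n c) <= T ^ 2 / freq n * sqrt M.
Proof.
  intros Hc Ht. pose proof (freq_pos n).
  assert (Hcc : c ^ 2 / freq n <= T ^ 2 / freq n)
    by (apply Rmult_le_compat_r; [left; apply Rinv_0_lt_compat; lra | nra]).
  assert (0 <= c ^ 2 / freq n) by (apply Rdiv_le_0_compat; [apply pow2_ge_0 | lra]).
  pose proof (Rabs_le_sqrt _ _ (hermite_fun_sq_le c Hc)).
  rewrite !Rabs_mult, (Rabs_right (c ^ 2 / freq n)) by lra.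
  rewrite <- (Rmult_1_r (T ^ 2 / freq n)).
  apply Rmult_le_compat; try apply Rmult_le_pos; try apply Rabs_pos; try lra.
  apply Rmult_le_compat; try apply Rabs_pos; lra.
Qed.

Lemma coef_cos_lipschitz (x y : R) : -T <= x <= T -> -T <= y <= T ->
  Rabs (coef_cos n x - coef_cos n y) <= T ^ 2 / freq n * sqrt M * Rabs (x - y).
Proof.
  intros Hx Hy. apply (mean_value_bound (coef_cos n) (fun z => - (z ^ 2 / freq n) * sin (freq n * z) * hermite_fun n z) (-T) T);
    [intros; apply is_derive_coef_cos| |exact Hy|exact Hx].
  intros c Hc. rewrite Ropp_mult_distr_l_reverse, Ropp_mult_distr_l_reverse, Rabs_Ropp.
  apply coef_speed_le; [exact Hc | apply Rabs_le, SIN_bound].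
Qed.

Lemma coef_sin_lipschitz (x y : R) : -T <= x <= T -> -T <= y <= T ->
  Rabs (coef_sin n x - coef_sin n y) <= T ^ 2 / freq n * sqrt M * Rabs (x - y).
Proof.
  intros Hx Hy. apply (mean_value_bound (coef_sin n) (fun z => z ^ 2 / freq n * cos (freq n * z) * hermite_fun n z) (-T) T);
    [intros; apply is_derive_coef_sin| |exact Hy|exact Hx].
  intros c Hc. apply coef_speed_le; [exact Hc | apply Rabs_le, COS_bound].
Qed.

Lemma coef_error_bound (x y : R) : -T <= x <= T -> -T <= y <= T -> amplitude n y <= M ->
  Rabs (coef_error n x y) <= 2 * (T ^ 2 / freq n) * M * Rabs (x - y).
Proof.
  intros Hx Hy Hamp. pose proof (freq_pos n).
  assert (HM : 0 <= M) by (pose proof (hermite_fun_sq_le y Hy); pose proof (pow2_ge_0 (hermite_fun n y)); lra).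
  set (t := freq n * (x - y)).
  set (u := sin t * coef_cos n y + cos t * coef_sin n y).
  set (v := cos t * coef_cos n y - sin t * coef_sin n y).
  assert (Huv : u ^ 2 + v ^ 2 = amplitude n y).
  { rewrite <- coef_sq_sum. unfold u, v.
    transitivity ((cos t ^ 2 + sin t ^ 2) * (coef_cos n y ^ 2 + coef_sin n y ^ 2)); [ring|].
    rewrite cos_sin_sq. ring. }
  assert (Hu : Rabs u <= sqrt M) by (apply Rabs_le_sqrt; pose proof (pow2_ge_0 v); lra).
  assert (Hv : Rabs v <= sqrt M) by (apply Rabs_le_sqrt; pose proof (pow2_ge_0 u); lra).
  pose proof (coef_cos_lipschitz x y Hx Hy). pose proof (coef_sin_lipschitz x y Hx Hy).
  assert (0 <= T ^ 2 / freq n) by (apply Rdiv_le_0_compat; [apply pow2_ge_0 | lra]).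
  assert (0 <= T ^ 2 / freq n * sqrt M * Rabs (x - y))
    by (apply Rmult_le_pos; [apply Rmult_le_pos; [lra | apply sqrt_pos] | apply Rabs_pos]).
  unfold coef_error. fold t u v.
  eapply Rle_trans; [apply Rabs_triang|]. rewrite Rabs_Ropp, !Rabs_mult.
  replace (2 * (T ^ 2 / freq n) * M * Rabs (x - y))
    with (T ^ 2 / freq n * sqrt M * Rabs (x - y) * sqrt M + T ^ 2 / freq n * sqrt M * Rabs (x - y) * sqrt M)
    by (pose proof (sqrt_sqrt M HM) as Hs; ring [Hs]).
  apply Rplus_le_compat; apply Rmult_le_compat; try apply Rabs_pos; lra.
Qed.

End CoefficientBounds.

(** * The estimate on [-T, T] *)

Lemma squeeze_near_1 (e g q w : R) : 0 <= e <= 1 / 4 -> 1 <= g <= 1 + 8 * e -> Rabs (q - 1) <= e / 2 ->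
  (1 - e) * q <= w * g -> w <= q * g -> Rabs (w - 1) <= 10 * e.
Proof.
  intros He Hg Hq%Rabs_le_between Hlo Hhi. apply Rabs_le_between. split; [|nra].
  assert (Hw : 0 <= w) by nra.
  assert ((1 - e) * (1 - e / 2) <= w * (1 + 8 * e)) by nra.
  nra.
Qed.

Section KernelEstimate.

Variables (T : R) (n : nat).
Hypothesis HT : 2 <= T.
Hypothesis Hn : 2 * T ^ 2 <= INR n.

Local Notation L := (hermite_eigenvalue n).
Local Notation lam := (freq n).
Local Notation rate := (2 * T / (hermite_eigenvalue n - T ^ 2)).
Local Notation peak := (energy n 0 * exp (rate * T)).

Lemma T_sq_large : 4 <= T ^ 2.
Proof. nra. Qed.

Lemma eigenvalue_large : 4 * T ^ 2 + 1 <= L.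
Proof. unfold hermite_eigenvalue. lra. Qed.

Lemma rate_pos : 0 < rate.
Proof. pose proof eigenvalue_large. pose proof T_sq_large. apply Rdiv_lt_0_compat; nra. Qed.

Lemma energy_growth (z : R) : -T <= z <= T ->
  energy n z <= peak /\ energy n 0 <= energy n z * exp (rate * T).
Proof.
  intros Hz. pose proof eigenvalue_large. pose proof T_sq_large. pose proof rate_pos.
  assert (Hd : forall c, -T <= c <= T -> is_derive (energy n) c
                 (2 * c * hermite_fun_der n c ^ 2 / (L - c ^ 2) ^ 2))
    by (intros c Hc; apply is_derive_energy; nra).
  assert (Hk : forall c, -T <= c <= T -> Rabs (2 * c * hermite_fun_der n c ^ 2 / (L - c ^ 2) ^ 2)
                                          <= rate * energy n c)
    by (intros c Hc; apply energy_log_derivative; [nra | exact Hc]).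
  assert (HzL : z ^ 2 < L) by nra. assert (H0L : 0 ^ 2 < L) by nra.
  assert (Hexp : exp (rate * Rabs (z - 0)) <= exp (rate * T)).
  { apply exp_le_compat, Rmult_le_compat_l; [lra|]. rewrite Rminus_0_r. apply Rabs_le. lra. }
  split.
  - eapply Rle_trans; [apply (gronwall _ _ (-T) T _ 0 z Hd Hk); lra|].
    apply Rmult_le_compat_l; [apply energy_nonneg, H0L | exact Hexp].
  - eapply Rle_trans; [apply (gronwall _ _ (-T) T _ z 0 Hd Hk); lra|].
    rewrite Rabs_minus_sym. apply Rmult_le_compat_l; [apply energy_nonneg, HzL | exact Hexp].
Qed.

Lemma growth_factor_bound : 1 <= exp (rate * T) <= 1 + 8 * (T ^ 2 / L).
Proof.
  pose proof eigenvalue_large. pose proof T_sq_large. pose proof rate_pos. pose proof (hermite_eigenvalue_pos n).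
  assert (Hr : rate * T * (L - T ^ 2) = 2 * T ^ 2) by (field; nra).
  assert (Hr0 : 0 <= rate * T) by (apply Rmult_le_pos; lra).
  assert (HrL : rate * T * L <= 8 / 3 * T ^ 2).
  { set (r := rate * T) in *. assert (r * (L - T ^ 2 - 3 / 4 * L) >= 0) by (apply Rle_ge, Rmult_le_pos; lra).
    lra. }
  assert (Hrt : rate * T <= 8 / 3 * (T ^ 2 / L)).
  { apply (Rmult_le_reg_r L); [lra|]. replace (8 / 3 * (T ^ 2 / L) * L) with (8 / 3 * T ^ 2) by (field; lra).
    exact HrL. }
  split.
  - pose proof (exp_ineq1_le (rate * T)). lra.
  - assert (T ^ 2 / L <= 1 / 4)
      by (apply (Rmult_le_reg_r L); [lra|]; replace (T ^ 2 / L * L) with (T ^ 2) by (field; lra); lra).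
    eapply Rle_trans; [apply exp_le_affine; lra | lra].
Qed.

Lemma center_close : Rabs (PI * lam * energy n 0 / 2 - 1) <= T ^ 2 / L / 2.
Proof.
  pose proof eigenvalue_large. pose proof T_sq_large. pose proof PI_RGT_0.
  assert (Hn1 : (1 <= n)%nat) by (apply INR_le; simpl; nra).
  assert (0 <= energy n 0) by (apply energy_nonneg; nra).
  assert (0 <= PI * lam * energy n 0 / 2)
    by (pose proof (freq_pos n); unfold Rdiv; apply Rmult_le_pos; [apply Rmult_le_pos; [nra|] |]; lra).
  eapply Rle_trans; [apply Rabs_sub1_le_sq; assumption|].
  eapply Rle_trans; [apply (energy_at_0_bound n Hn1)|].
  apply (Rmult_le_reg_r L); [lra|].
  replace (2 / L * L) with 2 by (field; lra). replace (T ^ 2 / L / 2 * L) with (T ^ 2 / 2) by (field; lra).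
  nra.
Qed.

Lemma amplitude_close (z : R) : -T <= z <= T -> Rabs (lam * amplitude n z / 2 - / PI) <= 4 * (T ^ 2 / L).
Proof.
  intros Hz. pose proof eigenvalue_large. pose proof T_sq_large. pose proof PI2_3_2. pose proof (freq_pos n).
  destruct (energy_growth z Hz) as [Hup Hlo].
  assert (HzL : z ^ 2 < L) by nra.
  pose proof (amplitude_le_energy n z HzL). pose proof (energy_le_amplitude n T z ltac:(nra) ltac:(nra)).
  assert (He : 0 <= T ^ 2 / L <= 1 / 4) by (split; [apply Rdiv_le_0_compat|apply (Rmult_le_reg_r L); [|field_simplify]]; nra).
  set (s := PI * lam / 2).
  assert (Hs : 0 < s) by (unfold s; nra).
  assert (Hw : Rabs (s * amplitude n z - 1) <= 10 * (T ^ 2 / L)).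
  { apply (squeeze_near_1 _ (exp (rate * T)) (s * energy n 0)); [exact He | apply growth_factor_bound | | |].
    - unfold s. replace (PI * lam / 2 * energy n 0) with (PI * lam * energy n 0 / 2) by field.
      apply center_close.
    - replace ((1 - T ^ 2 / L) * (s * energy n 0)) with (s * ((1 - T ^ 2 / L) * energy n 0)) by ring.
      rewrite Rmult_assoc. apply Rmult_le_compat_l; [lra|].
      eapply Rle_trans; [apply Rmult_le_compat_l; [lra | exact Hlo]|].
      rewrite <- Rmult_assoc. apply Rmult_le_compat_r; [left; apply exp_pos | exact H4].
    - rewrite Rmult_assoc. apply Rmult_le_compat_l; lra. }
  replace (lam * amplitude n z / 2 - / PI) with ((s * amplitude n z - 1) / PI) by (unfold s; field; lra).
  unfold Rdiv. rewrite Rabs_mult, (Rabs_right (/ PI)) by (left; apply Rinv_0_lt_compat; lra).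
  apply (Rmult_le_reg_r PI); [lra|]. rewrite Rmult_assoc, Rinv_l by lra. nra.
Qed.

Lemma peak_le : peak <= 3 / lam.
Proof.
  pose proof eigenvalue_large. pose proof T_sq_large. pose proof PI2_3_2. pose proof (freq_pos n).
  pose proof center_close as Hq%Rabs_le_between. destruct growth_factor_bound as [_ Hg].
  assert (He : T ^ 2 / L <= 1 / 4)
    by (apply (Rmult_le_reg_r L); [lra|]; replace (T ^ 2 / L * L) with (T ^ 2) by (field; lra); lra).
  assert (Hs : PI * lam / 2 * peak <= 27 / 8).
  { replace (PI * lam / 2 * peak) with (PI * lam * energy n 0 / 2 * exp (rate * T)) by (unfold Rdiv; ring).
    apply (Rle_trans _ (9 / 8 * 3)); [|lra].
    apply Rmult_le_compat; [| left; apply exp_pos | lra | lra].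
    apply Rmult_le_pos; [| lra]. pose proof (energy_nonneg n 0 ltac:(nra)). nra. }
  apply (Rmult_le_reg_l (PI * lam / 2)); [nra|].
  replace (PI * lam / 2 * (3 / lam)) with (3 * PI / 2) by (field; lra). lra.
Qed.

Lemma energy_le_peak (z : R) : -T <= z <= T -> energy n z <= peak.
Proof. intros Hz. apply energy_growth, Hz. Qed.

Lemma hermite_fun_sq_le_peak (z : R) : -T <= z <= T -> hermite_fun n z ^ 2 <= peak.
Proof.
  intros Hz. pose proof eigenvalue_large. eapply Rle_trans; [|apply energy_le_peak, Hz].
  unfold energy. assert (0 <= hermite_fun_der n z ^ 2 / (L - z ^ 2)) by (apply Rdiv_le_0_compat; [apply pow2_ge_0 | nra]).
  lra.
Qed.

Lemma amplitude_le_peak (z : R) : -T <= z <= T -> amplitude n z <= peak.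
Proof.
  intros Hz. pose proof eigenvalue_large.
  eapply Rle_trans; [apply amplitude_le_energy; nra | apply energy_le_peak, Hz].
Qed.

Lemma inv_freq_le : / lam <= T ^ 2 / lam / 4.
Proof.
  pose proof T_sq_large. pose proof (freq_pos n).
  apply (Rmult_le_reg_r lam); [lra|].
  replace (/ lam * lam) with 1 by (field; lra). replace (T ^ 2 / lam / 4 * lam) with (T ^ 2 / 4) by (field; lra).
  lra.
Qed.

Lemma hermite_fun_prod_le_peak (x y : R) : -T <= x <= T -> -T <= y <= T ->
  Rabs (hermite_fun n x * hermite_fun n y) <= peak.
Proof.
  intros Hx Hy. pose proof (Rabs_le_sqrt _ _ (hermite_fun_sq_le_peak x Hx)).
  pose proof (Rabs_le_sqrt _ _ (hermite_fun_sq_le_peak y Hy)).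
  assert (0 <= peak) by (eapply Rle_trans; [apply pow2_ge_0 | apply (hermite_fun_sq_le_peak x Hx)]).
  rewrite Rabs_mult, <- (sqrt_sqrt peak) by lra.
  apply Rmult_le_compat; try apply Rabs_pos; lra.
Qed.

Lemma coef_error_term_le (x y : R) : -T <= x <= T -> -T <= y <= T -> x - y <> 0 ->
  Rabs (lam * coef_error n x y / (2 * (x - y))) <= 3 * (T ^ 2 / lam).
Proof.
  intros Hx Hy Hd. pose proof (freq_pos n). pose proof (Rabs_pos_lt _ Hd). pose proof peak_le.
  pose proof (coef_error_bound n T peak hermite_fun_sq_le_peak x y Hx Hy (amplitude_le_peak y Hy)).
  unfold Rdiv. rewrite !Rabs_mult, Rabs_inv, Rabs_mult, (Rabs_right lam), (Rabs_right 2) by lra.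
  apply (Rmult_le_reg_r (2 * Rabs (x - y))); [lra|].
  replace (lam * Rabs (coef_error n x y) * / (2 * Rabs (x - y)) * (2 * Rabs (x - y)))
    with (lam * Rabs (coef_error n x y)) by (field; lra).
  apply (Rle_trans _ (lam * (2 * (T ^ 2 / lam) * peak * Rabs (x - y)))); [apply Rmult_le_compat_l; lra|].
  replace (lam * (2 * (T ^ 2 / lam) * peak * Rabs (x - y))) with (2 * Rabs (x - y) * (T ^ 2 * peak)) by (field; lra).
  replace (3 * (T ^ 2 * / lam) * (2 * Rabs (x - y))) with (2 * Rabs (x - y) * (T ^ 2 * (3 / lam))) by (field; lra).
  apply Rmult_le_compat_l; [lra|]. apply Rmult_le_compat_l; [apply pow2_ge_0 | lra].
Qed.

Lemma kernel_error_off_diag (N x y : R) : 0 <= N - lam <= 1 / (2 * lam) ->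
  -T <= x <= T -> -T <= y <= T -> x <> y ->
  Rabs (kernel_k n x y - / PI * (sin (N * (x - y)) / (x - y))) <= 17 * T ^ 2 / lam.
Proof.
  intros HN Hx Hy Hxy. pose proof (freq_pos n). pose proof PI2_3_2. pose proof T_sq_large.
  assert (Hd : x - y <> 0) by lra.
  rewrite kernel_off_diag, wronskian_coef by exact Hxy.
  replace (hermite_fun n x * hermite_fun n y / 2
           + lam * (amplitude n y * sin (lam * (x - y)) + coef_error n x y) / (2 * (x - y))
           - / PI * (sin (N * (x - y)) / (x - y)))
    with (hermite_fun n x * hermite_fun n y / 2
          + lam * coef_error n x y / (2 * (x - y))
          + (lam * amplitude n y / 2 - / PI) * (sin (lam * (x - y)) / (x - y))
          + / PI * ((sin (lam * (x - y)) - sin (N * (x - y))) / (x - y))) by (field; lra).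
  assert (0 < / PI) by (apply Rinv_0_lt_compat; lra).
  pose proof peak_le. pose proof inv_freq_le.
  assert (B1 : Rabs (hermite_fun n x * hermite_fun n y / 2) <= 3 / 2 * / lam).
  { pose proof (hermite_fun_prod_le_peak x y Hx Hy). unfold Rdiv in *. rewrite Rabs_mult, (Rabs_right (/ 2)) by lra. lra. }
  pose proof (coef_error_term_le x y Hx Hy Hd) as B2.
  assert (B3 : Rabs ((lam * amplitude n y / 2 - / PI) * (sin (lam * (x - y)) / (x - y))) <= 4 * (T ^ 2 / lam)).
  { rewrite Rabs_mult.
    replace (4 * (T ^ 2 / lam)) with (4 * (T ^ 2 / L) * Rabs lam) by (rewrite Rabs_right, <- freq_sq by lra; field; lra).
    apply Rmult_le_compat; try apply Rabs_pos; [apply amplitude_close, Hy | apply Rabs_sin_mul_div_le, Hd]. }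
  assert (B4 : Rabs (/ PI * ((sin (lam * (x - y)) - sin (N * (x - y))) / (x - y))) <= 1 / 6 * / lam).
  { rewrite Rabs_mult, (Rabs_right (/ PI)) by lra.
    apply (Rle_trans _ ((N - lam) / PI)); [|apply freq_gap_div_PI_le; lra].
    rewrite Rmult_comm. apply Rmult_le_compat_r; [lra|].
    eapply Rle_trans; [apply Rabs_sin_mul_sub_div_le, Hd|]. rewrite Rabs_minus_sym, Rabs_right by lra. lra. }
  assert (0 < / lam) by (apply Rinv_0_lt_compat; lra).
  replace (17 * T ^ 2 / lam) with (17 * (T ^ 2 / lam)) by (field; lra).
  match goal with |- Rabs (?a + ?b + ?c + ?d) <= _ =>
    pose proof (Rabs_triang (a + b + c) d); pose proof (Rabs_triang (a + b) c); pose proof (Rabs_triang a b) end.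
  lra.
Qed.

Lemma kernel_error_diag (N x : R) : 0 <= N - lam <= 1 / (2 * lam) -> -T <= x <= T ->
  Rabs (kernel_k n x x - N / PI) <= 17 * T ^ 2 / lam.
Proof.
  intros HN Hx. pose proof (freq_pos n). pose proof PI2_3_2. pose proof T_sq_large.
  assert (0 < / PI) by (apply Rinv_0_lt_compat; lra).
  assert (0 < / lam) by (apply Rinv_0_lt_compat; lra).
  pose proof peak_le. pose proof inv_freq_le.
  rewrite kernel_diag.
  replace (((L + 1 - x ^ 2) * hermite_fun n x ^ 2 + hermite_fun_der n x ^ 2) / 2 - N / PI)
    with ((1 - x ^ 2) * hermite_fun n x ^ 2 / 2 + lam * (lam * amplitude n x / 2 - / PI) - (N - lam) / PI)
    by (unfold amplitude; rewrite <- (freq_sq n); field; lra).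
  assert (B1 : Rabs ((1 - x ^ 2) * hermite_fun n x ^ 2 / 2) <= 3 / 2 * (T ^ 2 / lam)).
  { pose proof (hermite_fun_sq_le_peak x Hx). pose proof (pow2_ge_0 (hermite_fun n x)).
    assert (Rabs (1 - x ^ 2) <= T ^ 2) by (apply Rabs_le; nra).
    unfold Rdiv. rewrite !Rabs_mult, (Rabs_right (hermite_fun n x ^ 2)), (Rabs_right (/ 2)) by lra.
    apply (Rle_trans _ (T ^ 2 * (3 / lam) * / 2)); [|unfold Rdiv; lra].
    apply Rmult_le_compat_r; [lra|]. apply Rmult_le_compat; try apply Rabs_pos; lra. }
  assert (B2 : Rabs (lam * (lam * amplitude n x / 2 - / PI)) <= 4 * (T ^ 2 / lam)).
  { rewrite Rabs_mult, (Rabs_right lam) by lra.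
    replace (4 * (T ^ 2 / lam)) with (lam * (4 * (T ^ 2 / L))) by (rewrite <- (freq_sq n); field; lra).
    apply Rmult_le_compat_l; [lra | apply amplitude_close, Hx]. }
  assert (B3 : Rabs ((N - lam) / PI) <= 1 / 6 * / lam).
  { rewrite Rabs_right by (apply Rle_ge, Rdiv_le_0_compat; lra). apply freq_gap_div_PI_le; lra. }
  replace (17 * T ^ 2 / lam) with (17 * (T ^ 2 / lam)) by (field; lra).
  match goal with |- Rabs (?a + ?b - ?c) <= _ =>
    change (a + b - c) with (a + b + - c);
    pose proof (Rabs_triang (a + b) (- c)); pose proof (Rabs_triang a b); rewrite Rabs_Ropp in * end.
  lra.
Qed.

End KernelEstimate.

Theorem mainTheorem5 (T : R) (n : nat) :
  2 <= T ->
  2 * T ^ 2 <= INR n ->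
  let N := (sqrt (2 * INR n + 1) + sqrt (2 * INR n + 3)) / 2 in
  forall x y : R, -T <= x <= T -> -T <= y <= T ->
    Rabs (kernel_k n x y - sinc_term N x y) <= 17 * T ^ 2 / sqrt (2 * INR n + 1).
Proof.
  intros HT Hn N x y Hx Hy.
  assert (HN : 0 <= N - freq n <= 1 / (2 * freq n)).
  { unfold N. replace (2 * INR n + 3) with (hermite_eigenvalue n + 2) by (unfold hermite_eigenvalue; ring).
    apply sqrt_mean_gap, hermite_eigenvalue_pos. }
  change (sqrt (2 * INR n + 1)) with (freq n).
  unfold sinc_term. destruct (Req_EM_T x y) as [<-|Hxy].
  - apply kernel_error_diag; assumption.
  - apply kernel_error_off_diag; assumption.
Qed.
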